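(* Let $Q$ and $W$ satisfy the standing assumptions with $W=Y$, and let $l\ge1$. Then $\mathcal B(\hat Q^{l\triangledown})\subseteq\hat{\mathcal B}^l$.
   Context: Strings and signals: $\diamond$ is a symbol not in any other set considered. For a set $A$ and $l\in\mathbb N_0$, $A^l$ is the set of strings of length $l$ over $A$, indexed $\zeta=\zeta(0)\cdots\zeta(l-1)$. For a map $w$ on $\mathbb Z$ (or a string) and integers $t_1\le t_2$, $w|_{[t_1,t_2]}=w(t_1)\cdots w(t_2)$ is the string of length $t_2-t_1+1$ (absolute time forgotten). For a set $\mathcal S$ of such maps, $\mathcal S|_{[t_1,t_2]}=\{s|_{[t_1,t_2]}:s\in\mathcal S\}$. State machines: a state machine is $Q=(X,U,Y,\delta,X_0)$ with $X_0\subseteq X$, $\delta\subseteq X\times U\times Y\times X$. Let $H_\delta(x)=\{y:\exists u,x'.\,(x,u,y,x')\in\delta\}$, $F_\delta(x,u)=\{x':\exists y\in H_\delta(x).\,(x,u,y,x')\in\delta\}$. The full behavior $\mathcal B_f(Q)$ is the set of $(\mu,\nu,\xi)\in(U\times Y\times X)^{\mathbb N_0}$ with $\xi(0)\in X_0$ and $(\xi(k),\mu(k),\nu(k),\xi(k+1))\in\delta$ for all $k\in\mathbb N_0$. $Q$ is live and reachable if every $x\in X_0$ is $\xi(0)$ for some $(\mu,\nu,\xi)\in\mathcal B_f(Q)$ and every $x\in X$ is $\xi(k)$ for some such trajectory and some $k$. Standing assumptions: $Q=(X,U,Y,\delta,X_0)$ is live and reachable and satisfies $(x,u,y,x')\in\delta\iff(x'\in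 F_\delta(x,u)\wedge y\in H_\delta(x))$ for all $x,x'\in X,u\in U,y\in Y$; the external signal space $W$ is finite and either $W=U\times Y$ or $W=Y$ (here $W=Y$, with $\pi_Y(u,y)=y$). Behaviors: for a state machine $Q'$ with input set $U$ and output set $Y$, $\mathcal B(Q')$ is the set of $w:\mathbb Z\to Y\cup\{\diamond\}$ such that for some $(\mu,\nu,\xi)\in\mathcal B_f(Q')$, $w(k)=\diamond$ for $k<0$ and $w(k)=\nu(k)$ for $k\ge0$. $\mathcal B_S(Q)$ is the set of pairs $(w,\xi)$ of maps on $\mathbb Z$ with $w(k)=\xi(k)=\diamond$ for $k<0$ and $(w(k),\xi(k))=(\nu(k),\xi'(k))$ for $k\ge0$, for some $(\mu,\nu,\xi')\in\mathcal B_f(Q)$. For a set $\mathcal B$ of maps on $\mathbb Z$, $\Pi_l(\mathcal B)=\bigcup_{k\in\mathbb N_0}\mathcal B|_{[k-l+1,k]}$. SAlCA: for $l\in\mathbb N_0$, $\hat{\mathcal B}^l$ is the set of $w:\mathbb Z\to W\cup\{\diamond\}$ with $w(k)=\diamond$ for $k<0$, $w(k)\in W$ for $k\ge0$, $w|_{[-l,0]}\in\mathcal B(Q)|_{[-l,0]}$ and $w|_{[k-l,k]}\in\Pi_{l+1}(\mathcal B(Q))$ for all $k\in\mathbb N_0$. Corresponding strings: for integers $a,b$ and $x\in X$, $E^{[a,b]}(x)=\{\zeta:\exists(w,\xi)\in\mathcal B_S(Q),k\in\mathbb N_0:\ \xi(k)=x,\ \zeta=w|_{[k+a,k+b]}\}$;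 $I^l_l=[0,l-1]$. Quotient state machine (for $W=Y$): $\hat Q^{l\triangledown}=(\hat X^{l\triangledown},U,Y,\hat\delta^{l\triangledown},\hat X^{l\triangledown}_0)$ with $\hat X^{l\triangledown}=\{E^{I^l_l}(x):x\in X\}$ (a set of subsets of $Y^l$), $\hat X^{l\triangledown}_0=\{E^{I^l_l}(x):x\in X_0\}$, and $(\hat x,u,y,\hat x')\in\hat\delta^{l\triangledown}$ iff there exist $x,x'\in X$ with $\hat x=E^{I^l_l}(x)$, $\hat x'=E^{I^l_l}(x')$ and $(x,u,y,x')\in\delta$. *)

From Stdlib Require Import ZArith List.
Import ListNotations.
Open Scope Z_scope.

Record SM (X U Y : Type) := mkSM {
  sm_delta : X -> U -> Y -> X -> Prop;
  sm_X0 : X -> Prop }.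
Arguments sm_delta {X U Y}.
Arguments sm_X0 {X U Y}.

Definition Hd {X U Y} (Q : SM X U Y) (x : X) (y : Y) : Prop :=
  exists u x', sm_delta Q x u y x'.
Definition Fd {X U Y} (Q : SM X U Y) (x : X) (u : U) (x' : X) : Prop :=
  exists y, Hd Q x y /\ sm_delta Q x u y x'.

Definition Bf {X U Y} (Q : SM X U Y)
  (mu : nat -> U) (nu : nat -> Y) (xi : nat -> X) : Prop :=
  sm_X0 Q (xi O) /\ forall k : nat, sm_delta Q (xi k) (mu k) (nu k) (xi (S k)).

Definition live_reachable {X U Y} (Q : SM X U Y) : Prop :=
  (forall x, sm_X0 Q x -> exists mu nu xi, Bf Q mu nu xi /\ xi O = x) /\
  (forall x : X, exists mu nu xi k, Bf Q mu nu xi /\ xi k = x).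

Definition standing_delta {X U Y} (Q : SM X U Y) : Prop :=
  forall x u y x', sm_delta Q x u y x' <-> (Fd Q x u x' /\ Hd Q x y).

Definition finite_type (T : Type) : Prop := exists l : list T, forall t, In t l.

(* Signals on Z; the diamond symbol is None. *)
Definition signal (A : Type) := Z -> option A.

(* w|_[t1,t2] : string of length t2 - t1 + 1 (empty if t2 < t1) *)
Definition restrict {A} (w : signal A) (t1 t2 : Z) : list (option A) :=
  map (fun i : nat => w (t1 + Z.of_nat i)) (seq 0 (Z.to_nat (t2 - t1 + 1))).

Definition restrictSet {A} (S : signal A -> Prop) (t1 t2 : Z)
  (z : list (option A)) : Prop :=
  exists s, S s /\ z = restrict s t1 t2.

Definition Beh {X U Y} (Q : SM X U Y) (w : signal Y) : Prop :=
  exists mu nu xi, Bf Q mu nu xi /\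
    (forall k, k < 0 -> w k = None) /\
    (forall k, 0 <= k -> w k = Some (nu (Z.to_nat k))).

Definition BS {X U Y} (Q : SM X U Y) (w : signal Y) (xs : signal X) : Prop :=
  exists mu nu xi, Bf Q mu nu xi /\
    (forall k, k < 0 -> w k = None /\ xs k = None) /\
    (forall k, 0 <= k -> w k = Some (nu (Z.to_nat k)) /\
                         xs k = Some (xi (Z.to_nat k))).

Definition Pi {A} (l : nat) (B : signal A -> Prop) (z : list (option A)) : Prop :=
  exists k : nat, restrictSet B (Z.of_nat k - Z.of_nat l + 1) (Z.of_nat k) z.

Definition SAlCA {X U Y} (Q : SM X U Y) (l : nat) (w : signal Y) : Prop :=
  (forall k, k < 0 -> w k = None) /\
  (forall k, 0 <= k -> w k <> None) /\
  restrictSet (Beh Q) (- Z.of_nat l) 0 (restrict w (- Z.of_nat l) 0) /\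
  (forall k : nat, Pi (S l) (Beh Q)
      (restrict w (Z.of_nat k - Z.of_nat l) (Z.of_nat k))).

Definition Ecorr {X U Y} (Q : SM X U Y) (a b : Z) (x : X)
  (z : list (option Y)) : Prop :=
  exists w xs (k : nat), BS Q w xs /\ xs (Z.of_nat k) = Some x /\
    z = restrict w (Z.of_nat k + a) (Z.of_nat k + b).

Definition Eset {X U Y} (Q : SM X U Y) (l : nat) (x : X) : list (option Y) -> Prop :=
  Ecorr Q 0 (Z.of_nat l - 1) x.

(* Quotient state machine \hat Q^{l triangledown}; states are subsets of strings.
   Only states of the form E(x) occur in the initial set and transition relation. *)
Definition quotientSM {X U Y} (Q : SM X U Y) (l : nat)
  : SM (list (option Y) -> Prop) U Y :=
  mkSM _ U Y
    (fun hx u y hx' => exists x x', hx = Eset Q l x /\ hx' = Eset Q l x' /\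
                                    sm_delta Q x u y x')
    (fun hx => exists x, sm_X0 Q x /\ hx = Eset Q l x).

From Stdlib Require Import ZArith List Lia.

(* Call [x] able to emit a word [f] of length [n] if some run of [Q] started
   at [x] outputs [f] first.  Since every state is reachable, a word of length
   [n <= l] emitted by [x] is a prefix of some string in [E(x)], and every
   string of [E(x')] is emitted by [x']; so states with the same [E] emit the
   same words of length at most [l].  Along a run of the quotient machine the
   outputs at times [j .. j+m], [m < l], are then emitted by every [x] with
   [E(x)] the quotient state at time [j] (induction on [m], one transition of
   [Q] at a time).  Every window of length [l+1] of the quotient output is
   thus produced by one transition of [Q] followed by a word of length [l],
   hence occurs in a behaviour of [Q] once its initial state is reached; the
   initial windows come from an initial state directly. *)

Definition splice {A} (k : nat) (f g : nat -> A) (i : nat) : A :=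
  if Nat.ltb i k then f i else g (i - k)%nat.

Lemma splice_add {A} k (f g : nat -> A) i : splice k f g (k + i) = g i.
Proof.
  unfold splice. destruct (Nat.ltb_spec (k + i) k); [lia|].
  f_equal. lia.
Qed.

Definition of_seq {A} (f : nat -> A) : signal A :=
  fun z => if Z.ltb z 0 then None else Some (f (Z.to_nat z)).

Lemma of_seq_nonneg {A} (f : nat -> A) z : 0 <= z -> of_seq f z = Some (f (Z.to_nat z)).
Proof. intros Hz. unfold of_seq. destruct (Z.ltb_spec z 0); [lia | reflexivity]. Qed.

Lemma of_seq_nat {A} (f : nat -> A) n : of_seq f (Z.of_nat n) = Some (f n).
Proof. rewrite of_seq_nonneg, Nat2Z.id by lia. reflexivity. Qed.

Lemma restrict_nth {A} (w : signal A) a b i :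
  (i < Z.to_nat (b - a + 1))%nat -> nth i (restrict w a b) None = w (a + Z.of_nat i).
Proof.
  intros Hi. unfold restrict.
  rewrite nth_indep with (d' := w (a + Z.of_nat 0%nat)).
  - rewrite (map_nth (fun j : nat => w (a + Z.of_nat j))), seq_nth by exact Hi.
    reflexivity.
  - rewrite length_map, length_seq. exact Hi.
Qed.

Lemma restrict_ext {A} (s w : signal A) a b c d :
  c - a = d - b ->
  (forall i : nat, (i < Z.to_nat (c - a + 1))%nat ->
     s (a + Z.of_nat i) = w (b + Z.of_nat i)) ->
  restrict s a c = restrict w b d.
Proof.
  intros Hlen Hpt. unfold restrict. rewrite <- Hlen. apply map_ext_in.
  intros i Hi. apply in_seq in Hi. apply Hpt. lia.
Qed.

Section StateMachine.

Context {X U Y : Type}.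
Variable Q : SM X U Y.

Definition run_from (x : X) (mu : nat -> U) (nu : nat -> Y) (xi : nat -> X) : Prop :=
  xi O = x /\ forall k, sm_delta Q (xi k) (mu k) (nu k) (xi (S k)).

Definition emits (x : X) (n : nat) (f : nat -> Y) : Prop :=
  exists mu nu xi, run_from x mu nu xi /\ forall i, (i < n)%nat -> nu i = f i.

Lemma run_from_splice a mu nu xi k x mu' nu' xi' :
  xi O = a ->
  (forall i, (i < k)%nat -> sm_delta Q (xi i) (mu i) (nu i) (xi (S i))) ->
  xi k = x -> run_from x mu' nu' xi' ->
  run_from a (splice k mu mu') (splice k nu nu') (splice k xi xi').
Proof.
  intros H0 Hprefix Hk [Hx' Hsteps]. split.
  - unfold splice. destruct (Nat.ltb_spec 0 k); [assumption|].
    replace k with 0%nat in * by lia. simpl. congruence.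
  - intro i. unfold splice.
    destruct (Nat.ltb_spec i k), (Nat.ltb_spec (S i) k); try lia.
    + apply Hprefix. lia.
    + replace (S i - k)%nat with 0%nat by lia. rewrite Hx', <- Hk.
      replace k with (S i) by lia. apply Hprefix. lia.
    + replace (S i - k)%nat with (S (i - k)) by lia. apply Hsteps.
Qed.

Lemma run_from_Bf_tail mu nu xi k :
  Bf Q mu nu xi ->
  run_from (xi k) (fun i => mu (k + i)%nat) (fun i => nu (k + i)%nat)
    (fun i => xi (k + i)%nat).
Proof.
  intros [_ Hsteps]. split.
  - f_equal. lia.
  - intro i. replace (k + S i)%nat with (S (k + i)) by lia. apply Hsteps.
Qed.

Lemma emits_ext x n f g :
  (forall i, (i < n)%nat -> f i = g i) -> emits x n f -> emits x n g.
Proof.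
  intros Hfg (mu & nu & xi & Hrun & Hf). exists mu, nu, xi. split; [exact Hrun|].
  intros i Hi. rewrite Hf; auto.
Qed.

Lemma emits_cons x u y x' n f :
  sm_delta Q x u y x' -> emits x' n f ->
  emits x (S n) (fun i => match i with O => y | S i' => f i' end).
Proof.
  intros Hd (mu & nu & xi & Hrun & Hf).
  exists (splice 1 (fun _ => u) mu), (splice 1 (fun _ => y) nu),
    (splice 1 (fun i => match i with O => x | _ => x' end) xi).
  split.
  - apply run_from_splice with (x := x'); auto.
    intros i Hi. replace i with 0%nat by lia. exact Hd.
  - intros [|i] Hi; [reflexivity|].
    rewrite <- Nat.add_1_l, splice_add. apply Hf. lia.
Qed.

Lemma BS_of_Bf mu nu xi : Bf Q mu nu xi -> BS Q (of_seq nu) (of_seq xi).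
Proof.
  intros HB. exists mu, nu, xi. split; [exact HB|].
  split; intros k Hk; unfold of_seq; destruct (Z.ltb_spec k 0); auto; lia.
Qed.

Lemma Beh_of_Bf mu nu xi : Bf Q mu nu xi -> Beh Q (of_seq nu).
Proof.
  intros HB. exists mu, nu, xi. split; [exact HB|].
  split; intros k Hk; unfold of_seq; destruct (Z.ltb_spec k 0); auto; lia.
Qed.

Lemma Eset_window l mu nu xi k :
  Bf Q mu nu xi -> exists z, Eset Q l (xi k) z /\
    forall i, (i < l)%nat -> nth i z None = Some (nu (k + i)%nat).
Proof.
  intros HB. eexists. split.
  - exists (of_seq nu), (of_seq xi), k.
    split; [exact (BS_of_Bf _ _ _ HB)|]. split; [apply of_seq_nat | reflexivity].
  - intros i Hi. rewrite restrict_nth by lia.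
    replace (Z.of_nat k + 0 + Z.of_nat i) with (Z.of_nat (k + i)) by lia.
    apply of_seq_nat.
Qed.

Lemma Eset_inv l x z :
  Eset Q l x z -> exists mu nu xi k, Bf Q mu nu xi /\ xi k = x /\
    forall i, (i < l)%nat -> nth i z None = Some (nu (k + i)%nat).
Proof.
  intros (w & xs & k & (mu & nu & xi & HB & _ & Hpos) & Hxk & Hz).
  exists mu, nu, xi, k. split; [exact HB|]. split.
  - destruct (Hpos (Z.of_nat k)) as [_ Hxs]; [lia|].
    rewrite Nat2Z.id, Hxk in Hxs. congruence.
  - intros i Hi. rewrite Hz, restrict_nth by lia.
    replace (Z.of_nat k + 0 + Z.of_nat i) with (Z.of_nat (k + i)) by lia.
    destruct (Hpos (Z.of_nat (k + i))) as [Hw _]; [lia|].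
    rewrite Hw, Nat2Z.id. reflexivity.
Qed.

Hypothesis Hlr : live_reachable Q.

Lemma emits_nil x f : emits x 0 f.
Proof.
  destruct (proj2 Hlr x) as (mu & nu & xi & k & HB & Hk).
  exists (fun i => mu (k + i)%nat), (fun i => nu (k + i)%nat), (fun i => xi (k + i)%nat).
  split; [|intros; lia]. rewrite <- Hk. exact (run_from_Bf_tail _ _ _ k HB).
Qed.

Lemma emits_on_trajectory x n f :
  emits x n f -> exists mu nu xi k, Bf Q mu nu xi /\ xi k = x /\
    forall i, (i < n)%nat -> nu (k + i)%nat = f i.
Proof.
  intros (mu' & nu' & xi' & Hrun & Hf).
  destruct (proj2 Hlr x) as (mu & nu & xi & k & [HX Hsteps] & Hk).
  destruct (run_from_splice (xi O) mu nu xi k x mu' nu' xi' eq_refl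
              (fun i _ => Hsteps i) Hk Hrun) as [H0 Hsteps'].
  exists (splice k mu mu'), (splice k nu nu'), (splice k xi xi'), k.
  split; [split; [rewrite H0; exact HX | exact Hsteps']|]. split.
  - rewrite <- (Nat.add_0_r k) at 2. rewrite splice_add. apply (proj1 Hrun).
  - intros i Hi. rewrite splice_add. auto.
Qed.

Lemma Eset_emits l x x' n f :
  Eset Q l x = Eset Q l x' -> (n <= l)%nat -> emits x n f -> emits x' n f.
Proof.
  intros HE Hn Hx.
  destruct (emits_on_trajectory x n f Hx) as (mu & nu & xi & k & HB & Hk & Hf).
  destruct (Eset_window l mu nu xi k HB) as (z & Hz & Hzk).
  rewrite Hk, HE in Hz.
  destruct (Eset_inv l x' z Hz) as (mu' & nu' & xi' & k' & HB' & Hk' & Hzk').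
  exists (fun i => mu' (k' + i)%nat), (fun i => nu' (k' + i)%nat),
    (fun i => xi' (k' + i)%nat).
  split; [rewrite <- Hk'; exact (run_from_Bf_tail _ _ _ k' HB')|].
  intros i Hi. rewrite <- Hf by exact Hi.
  enough (Some (nu' (k' + i)%nat) = Some (nu (k + i)%nat)) by congruence.
  rewrite <- Hzk, <- Hzk' by lia. reflexivity.
Qed.

Section QuotientRun.

Context {l : nat} {qmu : nat -> U} {qnu : nat -> Y}
  {qxi : nat -> list (option Y) -> Prop}.
Hypothesis Hq : Bf (quotientSM Q l) qmu qnu qxi.

Lemma quotient_init : exists x, sm_X0 Q x /\ qxi O = Eset Q l x.
Proof. exact (proj1 Hq). Qed.

Lemma quotient_step j : exists x x', qxi j = Eset Q l x /\
  qxi (S j) = Eset Q l x' /\ sm_delta Q x (qmu j) (qnu j) x'.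
Proof. exact (proj2 Hq j). Qed.

Lemma quotient_emits_cons j x n :
  (n < l)%nat -> qxi j = Eset Q l x ->
  (forall x', qxi (S j) = Eset Q l x' -> emits x' n (fun i => qnu (S j + i)%nat)) ->
  emits x (S n) (fun i => qnu (j + i)%nat).
Proof.
  intros Hn Hj Hnext.
  destruct (quotient_step j) as (x1 & x1' & E1 & E2 & Hd).
  apply (Eset_emits l x1); [congruence | lia |].
  eapply emits_ext; [| exact (emits_cons _ _ _ _ _ _ Hd (Hnext x1' E2))].
  intros [|i] _; f_equal; lia.
Qed.

Lemma quotient_run_emits m j x :
  (m < l)%nat -> qxi j = Eset Q l x -> emits x (S m) (fun i => qnu (j + i)%nat).
Proof.
  revert j x. induction m as [|m IH]; intros j x Hm Hj;
    apply quotient_emits_cons; auto; try lia; intros x' Hx'.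
  - apply emits_nil.
  - apply IH; [lia | exact Hx'].
Qed.

Context {w : signal Y}.
Hypothesis Hneg : forall k, k < 0 -> w k = None.
Hypothesis Hpos : forall k, 0 <= k -> w k = Some (qnu (Z.to_nat k)).

Lemma quotient_initial_window k :
  (k < l)%nat -> exists s, Beh Q s /\
    restrict s (Z.of_nat k - Z.of_nat l) (Z.of_nat k)
    = restrict w (Z.of_nat k - Z.of_nat l) (Z.of_nat k).
Proof.
  intros Hk. destruct quotient_init as (x0 & HX0 & Hx0).
  destruct (quotient_run_emits k O x0 Hk Hx0) as (mu & nu & xi & [H0 Hsteps] & Hf).
  exists (of_seq nu). split.
  - apply (Beh_of_Bf mu nu xi). split; [rewrite H0; exact HX0 | exact Hsteps].
  - apply restrict_ext; [reflexivity|]. intros i Hi.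
    destruct (Z.ltb_spec (Z.of_nat k - Z.of_nat l + Z.of_nat i) 0).
    + rewrite Hneg by assumption. unfold of_seq.
      destruct (Z.ltb_spec (Z.of_nat k - Z.of_nat l + Z.of_nat i) 0); [reflexivity | lia].
    + rewrite of_seq_nonneg, Hpos, Hf by lia. reflexivity.
Qed.

Lemma quotient_late_window k :
  (1 <= l <= k)%nat ->
  Pi (S l) (Beh Q) (restrict w (Z.of_nat k - Z.of_nat l) (Z.of_nat k)).
Proof.
  intros Hlk. set (j := (k - l)%nat).
  destruct (quotient_step j) as (y & y' & _ & Hy' & Hd).
  assert (Hy : emits y (S l) (fun i => qnu (j + i)%nat)).
  { replace (S l) with (S (S (pred l))) by lia.
    eapply emits_ext;
      [| exact (emits_cons _ _ _ _ _ _ Hd (quotient_run_emits (pred l) (S j) y' ltac:(lia) Hy'))].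
    intros [|i] _; f_equal; lia. }
  destruct (emits_on_trajectory y _ _ Hy) as (mu & nu & xi & k0 & HB & _ & Hf).
  exists (k0 + l)%nat, (of_seq nu). split; [exact (Beh_of_Bf _ _ _ HB)|].
  symmetry. apply restrict_ext; [lia|]. intros i Hi.
  rewrite Hpos, of_seq_nonneg by lia.
  replace (Z.to_nat (Z.of_nat (k0 + l) - Z.of_nat (S l) + 1 + Z.of_nat i))
    with (k0 + i)%nat by lia.
  rewrite Hf by lia. f_equal. f_equal. lia.
Qed.

Lemma quotient_window k :
  (1 <= l)%nat -> Pi (S l) (Beh Q) (restrict w (Z.of_nat k - Z.of_nat l) (Z.of_nat k)).
Proof.
  intros Hl. destruct (Nat.lt_ge_cases k l) as [Hkl | Hkl].
  - destruct (quotient_initial_window k Hkl) as (s & Hs & Heq).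
    exists k, s. split; [exact Hs|].
    replace (Z.of_nat k - Z.of_nat (S l) + 1) with (Z.of_nat k - Z.of_nat l) by lia.
    congruence.
  - apply quotient_late_window. lia.
Qed.

End QuotientRun.
End StateMachine.

Theorem theorem8 (X U Y : Type) (Q : SM X U Y)
  (HY : finite_type Y) (Hlr : live_reachable Q) (Hst : standing_delta Q)
  (l : nat) (hl : (1 <= l)%nat) :
  forall w : signal Y, Beh (quotientSM Q l) w -> SAlCA Q l w.
Proof.
  intros w (mu & nu & xi & Hq & Hneg & Hpos).
  split; [exact Hneg|]. split.
  - intros k Hk. rewrite Hpos by exact Hk. discriminate.
  - split.
    + destruct (quotient_initial_window Q Hlr Hq Hneg Hpos 0 hl) as (s & Hs & Heq).
      exists s. split; [exact Hs|].
      replace (- Z.of_nat l) with (Z.of_nat 0 - Z.of_nat l) by lia.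
      change 0 with (Z.of_nat 0). congruence.
    + intro k. exact (quotient_window Q Hlr Hq Hneg Hpos k hl).
Qed.
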